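(* Let $\mathbf{Q}=\begin{pmatrix} Q_{11} & Q_{12}\\ Q_{12} & Q_{22}\end{pmatrix}$ be a real symmetric positive definite $2\times 2$ matrix (the quantum Fisher information matrix of a two-parameter model with parameters $\lambda_1,\lambda_2$). Define the joint-estimation quantity $$\mu=\operatorname{Tr}[\mathbf{Q}^{-1}]=\frac{Q_{11}+Q_{22}}{Q_{11}Q_{22}-Q_{12}^2},$$ and, for $\gamma\in(0,1)$, the stepwise-estimation quantities $$\mu'(\gamma)=\frac{\operatorname{Tr}[\mathbf{W}_1\mathbf{Q}^{-1}]}{\gamma}+\frac{1}{(1-\gamma)Q_{22}}=\frac{Q_{22}}{\gamma\,(Q_{11}Q_{22}-Q_{12}^2)}+\frac{1}{(1-\gamma)Q_{22}},$$ $$\mu''(\gamma)=\frac{\operatorname{Tr}[\mathbf{W}_2\mathbf{Q}^{-1}]}{\gamma}+\frac{1}{(1-\gamma)Q_{11}}=\frac{Q_{11}}{\gamma\,(Q_{11}Q_{22}-Q_{12}^2)}+\frac{1}{(1-\gamma)Q_{11}},$$ where $\mathbf{W}_1=\operatorname{diag}(1,0)$ and $\mathbf{W}_2=\operatorname{diag}(0,1)$. If $$\frac{Q_{12}^2}{Q_{11}Q_{22}}>2\sqrt{2}-2,$$ then there exists $\gamma\in(0,1)$ such that $\min\big(\mu'(\gamma),\mu''(\gamma)\big)<\mu$; equivalently, $\tilde{\mu}:=\inf_{\gamma\in(0,1)}\min\big(\mu'(\gamma),\mu''(\gamma)\big)<\mu$.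
   Context: Interpretation: for $M$ measurement rounds, $\mu/M$ is the multiparameter quantum Cramér–Rao lower bound on $\Delta^2_{\hat\Lambda_1}+\Delta^2_{\hat\Lambda_2}$ for joint estimation of both parameters, while $\mu'(\gamma)/M$ (resp. $\mu''(\gamma)/M$) is the corresponding lower bound for the stepwise scheme that spends $\gamma M$ rounds estimating $\lambda_1$ (resp. $\lambda_2$) first and the remaining $(1-\gamma)M$ rounds estimating the other parameter as a single-parameter problem (with the first parameter's estimate replaced by its true value, as in the asymptotic limit). ''Stepwise estimation outperforms joint estimation'' means $\tilde\mu<\mu$. *)

From mathcomp Require Import all_boot all_order all_algebra.
Set Implicit Arguments. Unset Strict Implicit. Unset Printing Implicit Defensive.
Import Order.TTheory GRing.Theory Num.Theory.
Local Open Scope ring_scope.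

Definition sym_posdef (R : rcfType) (Q : 'M[R]_2) : Prop :=
  Q^T = Q /\ forall v : 'cV[R]_2, v != 0 -> 0 < (v^T *m Q *m v) ord0 ord0.

Definition W1 (R : rcfType) : 'M[R]_2 := diag_mx (\row_(i < 2) (if i == ord0 then 1 else 0)).
Definition W2 (R : rcfType) : 'M[R]_2 := diag_mx (\row_(i < 2) (if i == ord0 then 0 else 1)).

Definition Q11 (R : rcfType) (Q : 'M[R]_2) := Q ord0 ord0.
Definition Q22 (R : rcfType) (Q : 'M[R]_2) := Q ord_max ord_max.
Definition Q12 (R : rcfType) (Q : 'M[R]_2) := Q ord0 ord_max.

Definition mu (R : rcfType) (Q : 'M[R]_2) : R := \tr (invmx Q).

Definition mu1 (R : rcfType) (Q : 'M[R]_2) (g : R) : R :=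
  \tr (W1 R *m invmx Q) / g + 1 / ((1 - g) * Q22 Q).
Definition mu2 (R : rcfType) (Q : 'M[R]_2) (g : R) : R :=
  \tr (W2 R *m invmx Q) / g + 1 / ((1 - g) * Q11 Q).

(* Write a = Q11, b = Q22, c = Q12 and D = ab - c^2, so that Q^-1 = [[b, -c], [-c, a]] / D,
   mu = (a + b) / D and mu'(g) = p / g + q / (1 - g) with p = b / D and q = 1 / b.
   Minimising over g (at g = sqrt p / (sqrt p + sqrt q)) gives (sqrt p + sqrt q)^2, which beats
   mu = p + a / D exactly when 4 b^2 D < c^4.  Choosing between mu' and mu'' so that b <= a,
   and writing r = c^2 / (ab), this follows from
   4 b^2 D <= 4 (ab)^2 (1 - r) < r^2 (ab)^2, i.e. from r^2 + 4 r > 4, i.e. r > 2 sqrt 2 - 2. *)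

From mathcomp Require Import all_boot all_order all_algebra.
From mathcomp Require Import ring lra.
Set Implicit Arguments. Unset Strict Implicit. Unset Printing Implicit Defensive.
Import Order.TTheory GRing.Theory Num.Theory.
Local Open Scope ring_scope.

Lemma lift0_ord_max : lift ord0 ord0 = ord_max :> 'I_2.
Proof. exact: val_inj. Qed.

Lemma lift_ord_max0 : lift ord_max ord0 = ord0 :> 'I_2.
Proof. exact: val_inj. Qed.

Lemma mxtrace2 (R : nmodType) (A : 'M[R]_2) :
  \tr A = A ord0 ord0 + A ord_max ord_max.
Proof. by rewrite /mxtrace !big_ord_recl big_ord0 addr0 lift0_ord_max. Qed.

Lemma det_mx2 (R : comNzRingType) (A : 'M[R]_2) :
  \det A = A ord0 ord0 * A ord_max ord_max - A ord0 ord_max * A ord_max ord0.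
Proof.
rewrite (expand_det_row A ord0) !big_ord_recl big_ord0 /cofactor !det_mx11 !mxE.
by rewrite lift0_ord_max lift_ord_max0 /= expr0 expr1 mulN1r mulrN addr0 mul1r.
Qed.

Lemma invmx2_00 (R : comUnitRingType) (A : 'M[R]_2) : A \in unitmx ->
  invmx A ord0 ord0 = A ord_max ord_max / \det A.
Proof.
move=> hA; rewrite /invmx hA !mxE /cofactor det_mx11 !mxE lift0_ord_max.
by rewrite /= expr0 mul1r mulrC.
Qed.

Lemma invmx2_11 (R : comUnitRingType) (A : 'M[R]_2) : A \in unitmx ->
  invmx A ord_max ord_max = A ord0 ord0 / \det A.
Proof.
move=> hA; rewrite /invmx hA !mxE /cofactor det_mx11 !mxE lift_ord_max0.
by rewrite /= -signr_odd /= expr0 mul1r mulrC.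
Qed.

Lemma quad_form_mx2 (R : comNzRingType) (A : 'M[R]_2) (v : 'cV[R]_2) : A^T = A ->
  (v^T *m A *m v) ord0 ord0 = A ord0 ord0 * v ord0 ord0 ^+ 2
    + 2 * A ord0 ord_max * v ord0 ord0 * v ord_max ord0 + A ord_max ord_max * v ord_max ord0 ^+ 2.
Proof.
move=> /matrixP /(_ ord_max ord0); rewrite mxE => sym.
rewrite !mxE !big_ord_recl big_ord0 !mxE !big_ord_recl !big_ord0 !mxE lift0_ord_max sym.
ring.
Qed.

Section PosDef.

Variables (R : rcfType) (Q : 'M[R]_2).
Hypothesis posQ : sym_posdef Q.

Lemma sym_posdef_offdiag : Q ord_max ord0 = Q12 Q.
Proof. by case: posQ => /matrixP /(_ ord_max ord0); rewrite mxE. Qed.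

Lemma sym_posdef_form (x y : R) : (x != 0) || (y != 0) ->
  0 < Q11 Q * x ^+ 2 + 2 * Q12 Q * x * y + Q22 Q * y ^+ 2.
Proof.
move=> xy_neq0; case: posQ => symQ posv.
pose v : 'cV[R]_2 := \col_i (if i == ord0 then x else y).
have [v0 v1] : v ord0 ord0 = x /\ v ord_max ord0 = y by rewrite !mxE.
rewrite /Q11 /Q12 /Q22 -v0 -v1 -quad_form_mx2 //; apply: posv.
by apply: contraTneq xy_neq0 => v_eq0; rewrite -v0 -v1 v_eq0 !mxE eqxx.
Qed.

Lemma sym_posdef_Q11_gt0 : 0 < Q11 Q.
Proof. by have := @sym_posdef_form 1 0; rewrite oner_neq0 => /(_ isT); lra. Qed.

Lemma sym_posdef_Q22_gt0 : 0 < Q22 Q.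
Proof. by have := @sym_posdef_form 0 1; rewrite oner_neq0 orbT => /(_ isT); lra. Qed.

Lemma sym_posdef_det : \det Q = Q11 Q * Q22 Q - Q12 Q ^+ 2.
Proof. by rewrite det_mx2 sym_posdef_offdiag expr2. Qed.

Lemma sym_posdef_det_gt0 : 0 < Q11 Q * Q22 Q - Q12 Q ^+ 2.
Proof.
have a_gt0 := sym_posdef_Q11_gt0.
have := @sym_posdef_form (Q12 Q) (- Q11 Q).
rewrite oppr_eq0 (lt0r_neq0 a_gt0) orbT => /(_ isT).
have -> : Q11 Q * Q12 Q ^+ 2 + 2 * Q12 Q * Q12 Q * - Q11 Q + Q22 Q * (- Q11 Q) ^+ 2
  = Q11 Q * (Q11 Q * Q22 Q - Q12 Q ^+ 2) by ring.
by rewrite pmulr_rgt0.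
Qed.

Lemma sym_posdef_unitmx : Q \in unitmx.
Proof. by rewrite unitmxE sym_posdef_det unitfE (lt0r_neq0 sym_posdef_det_gt0). Qed.

Lemma muE : mu Q = (Q11 Q + Q22 Q) / \det Q.
Proof.
rewrite /mu mxtrace2 invmx2_00 ?invmx2_11 ?sym_posdef_unitmx //.
by rewrite -mulrDl addrC.
Qed.

Lemma mu1E g : mu1 Q g = Q22 Q / \det Q / g + 1 / ((1 - g) * Q22 Q).
Proof.
rewrite /mu1 mul_diag_mx mxtrace2 !mxE /= invmx2_00 ?sym_posdef_unitmx //.
by rewrite mul1r mul0r addr0.
Qed.

Lemma mu2E g : mu2 Q g = Q11 Q / \det Q / g + 1 / ((1 - g) * Q11 Q).
Proof.
rewrite /mu2 mul_diag_mx mxtrace2 !mxE /= invmx2_11 ?sym_posdef_unitmx //.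
by rewrite mul1r mul0r add0r.
Qed.

End PosDef.

Section Scalar.

Variable R : rcfType.

Lemma split_sum_at_sqrt_ratio (p q : R) : 0 < p -> 0 < q ->
  let g := Num.sqrt p / (Num.sqrt p + Num.sqrt q) in
  0 < g < 1 /\ p / g + q / (1 - g) = (Num.sqrt p + Num.sqrt q) ^+ 2.
Proof.
move=> p_gt0 q_gt0; rewrite /=.
set s := Num.sqrt p; set t := Num.sqrt q.
have s_gt0 : 0 < s by rewrite sqrtr_gt0.
have t_gt0 : 0 < t by rewrite sqrtr_gt0.
have [-> ->] : p = s ^+ 2 /\ q = t ^+ 2 by rewrite !sqr_sqrtr ?ltW.
split; last by field; lra.
by rewrite divr_gt0 ?addr_gt0 //= ltr_pdivrMr ?addr_gt0 //; lra.
Qed.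

Lemma exists_split_lt (p q s : R) : 0 < p -> 0 < q -> q < s -> 4 * p * q < (s - q) ^+ 2 ->
  exists2 g, 0 < g < 1 & p / g + q / (1 - g) < p + s.
Proof.
move=> p_gt0 q_gt0 qs pq_lt.
have [g_01 gE] := split_sum_at_sqrt_ratio p_gt0 q_gt0.
exists (Num.sqrt p / (Num.sqrt p + Num.sqrt q)) => //; rewrite gE.
set u := Num.sqrt p * Num.sqrt q.
have u_ge0 : 0 <= u by rewrite mulr_ge0 ?sqrtr_ge0.
have u2 : u ^+ 2 = p * q by rewrite exprMn !sqr_sqrtr ?ltW.
have -> : (Num.sqrt p + Num.sqrt q) ^+ 2 = p + q + 2 * u.
  by rewrite sqrrD !sqr_sqrtr ?ltW // /u; ring.
suff : 2 * u < s - q by lra.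
nra.
Qed.

Lemma stepwise_lt_joint (a b c : R) : 0 < b -> 0 < a * b - c ^+ 2 ->
  4 * b ^+ 2 * (a * b - c ^+ 2) < c ^+ 4 ->
  exists2 g, 0 < g < 1 &
    b / (a * b - c ^+ 2) / g + 1 / ((1 - g) * b) < (a + b) / (a * b - c ^+ 2).
Proof.
move=> b_gt0 D_gt0 cond; set D := a * b - c ^+ 2 in D_gt0 cond *.
have c2_gt0 : 0 < c ^+ 2 by nra.
have [||||g g_01 lt_g] := @exists_split_lt (b / D) (1 / b) (a / D).
- by rewrite divr_gt0.
- by rewrite divr_gt0.
- by rewrite ltr_pdivrMr // mulrAC ltr_pdivlMr // mul1r /D; lra.
- have -> : a / D - 1 / b = (a * b - D) / (b * D) by field; lra.
  have -> : a * b - D = c ^+ 2 by rewrite /D; ring.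
  have -> : 4 * (b / D) * (1 / b) = 4 / D by field; lra.
  rewrite expr_div_n ltr_pdivlMr ?exprn_gt0 ?mulr_gt0 //.
  have -> : 4 / D * (b * D) ^+ 2 = 4 * b ^+ 2 * D by field; lra.
  by rewrite -exprM.
exists g => //; case/andP: g_01 => _ g_lt1.
have -> : (a + b) / D = b / D + a / D by rewrite -mulrDl addrC.
by rewrite [1 / (_ * b)](_ : _ = 1 / b / (1 - g)) //; field; lra.
Qed.

Lemma stepwise_condition (a b c : R) : 0 < a -> 0 < b -> b <= a ->
  2 * Num.sqrt 2 - 2 < c ^+ 2 / (a * b) -> 4 * b ^+ 2 * (a * b - c ^+ 2) < c ^+ 4.
Proof.
move=> a_gt0 b_gt0 ba; set r := c ^+ 2 / (a * b) => r_gt.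
have ab_gt0 : 0 < a * b by rewrite mulr_gt0.
have cE : c ^+ 2 = r * (a * b) by rewrite /r mulfVK // lt0r_neq0.
have s2 : Num.sqrt 2 ^+ 2 = 2 :> R by rewrite sqr_sqrtr.
have s2_ge0 : 0 <= Num.sqrt 2 :> R by rewrite sqrtr_ge0.
have r_quad : 4 < r ^+ 2 + 4 * r by nra.
have r_gt0 : 0 < r by nra.
have -> : c ^+ 4 = (c ^+ 2) ^+ 2 by rewrite -exprM.
rewrite cE; set x := a * b in ab_gt0 *.
have bx : b ^+ 2 <= x by rewrite /x expr2 ler_pM2r.
have [r_le1 | r_gt1] := lerP r 1.
  have : 0 <= (x - b ^+ 2) * (x * (1 - r)) by rewrite mulr_ge0 ?mulr_ge0 ?subr_ge0 ?bx ?r_le1 ?ltW.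
  have : 0 < x ^+ 2 * (r ^+ 2 + 4 * r - 4) by rewrite mulr_gt0 ?exprn_gt0 ?subr_gt0.
  nra.
have : 0 < b ^+ 2 * x * (r - 1) by rewrite mulr_gt0 ?subr_gt0 // mulr_gt0 // exprn_gt0.
have : 0 < (r * x) ^+ 2 by rewrite exprn_gt0 // mulr_gt0.
nra.
Qed.

End Scalar.

Theorem theorem1 (R : rcfType) (Q : 'M[R]_2) :
  sym_posdef Q ->
  (Q12 Q) ^+ 2 / (Q11 Q * Q22 Q) > 2 * Num.sqrt 2 - 2 ->
  exists g : R, 0 < g < 1 /\ Num.min (mu1 Q g) (mu2 Q g) < mu Q.
Proof.
move=> posQ r_gt.
have a_gt0 := sym_posdef_Q11_gt0 posQ; have b_gt0 := sym_posdef_Q22_gt0 posQ.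
have D_gt0 := sym_posdef_det_gt0 posQ.
case: (leP (Q22 Q) (Q11 Q)) => [ba | /ltW ab].
  have [g g_01 lt_g] := stepwise_lt_joint b_gt0 D_gt0 (stepwise_condition a_gt0 b_gt0 ba r_gt).
  by exists g; rewrite gt_min mu1E // muE // sym_posdef_det // lt_g.
rewrite [Q11 Q * _]mulrC in r_gt D_gt0.
have [g g_01 lt_g] := stepwise_lt_joint a_gt0 D_gt0 (stepwise_condition b_gt0 a_gt0 ab r_gt).
have detE : \det Q = Q22 Q * Q11 Q - Q12 Q ^+ 2 by rewrite sym_posdef_det // mulrC.
by exists g; rewrite gt_min mu2E // muE // addrC detE lt_g orbT.
Qed.
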